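(* Let $(X,Y)$ be a random pair with $Y$ real-valued and $\mathbb{E}[Y^2]<\infty$, and let $m^\star(x)=\mathbb{E}[Y\mid X=x]$. Suppose $g^\star(x)=h(m^\star(x))$ for some strictly increasing $h:\mathbb{R}\to\mathbb{R}$. Let $\mathcal{F}$ be the set of nondecreasing functions $f:\mathbb{R}\to\mathbb{R}$, and let $f^\star$ be any minimizer of $\mathbb{E}\big[(Y-f(g^\star(X)))^2\big]$ over $f\in\mathcal{F}$. Then $f^\star(g^\star(X))=m^\star(X)$. *)

From HB Require Import structures.
From mathcomp Require Import all_boot all_order all_algebra.
From mathcomp Require Import all_classical all_reals all_analysis.
Set Implicit Arguments. Unset Strict Implicit. Unset Printing Implicit Defensive.
Import Order.TTheory GRing.Theory Num.Theory.
Local Open Scope classical_set_scope.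
Local Open Scope ring_scope.

Definition is_cond_exp {d d' : measure_display} {T : measurableType d}
  {S : measurableType d'} {R : realType} (P : probability T R)
  (X : T -> S) (Y : T -> R) (m : S -> R) : Prop :=
  [/\ measurable_fun setT m,
      P.-integrable setT (fun t => (m (X t))%:E) &
      forall A : set S, measurable A ->
        (\int[P]_(t in X @^-1` A) (Y t)%:E =
         \int[P]_(t in X @^-1` A) (m (X t))%:E)%E].

Definition sq_risk {d d' : measure_display} {T : measurableType d}
  {S : measurableType d'} {R : realType} (P : probability T R)
  (X : T -> S) (Y : T -> R) (g : S -> R) (f : R -> R) : \bar R :=
  (\int[P]_t ((Y t - f (g (X t))) ^+ 2)%:E)%E.

(* Write Z := mstar (X) and V := fstar (gstar (X)).  For N > 0 let k_N be a
   nondecreasing function with k_N o h = clip_N (a generalized inverse of h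
   clipped to [-N, N]).  As clip_N is nondecreasing and 1-Lipschitz,
   f_s := fstar + s (k_N - clip_N o fstar) is nondecreasing for 0 <= s <= 1,
   and f_s (gstar (X)) = V + s psi (X) with psi (X) = clip_N Z - clip_N V.
   Minimality of fstar against f_s, s -> 0+, gives E[psi (X) (Y - V)] <= 0,
   whereas E[psi (X) (Y - Z)] = 0 since psi is bounded and Z = E[Y | X].
   Hence E[(Z - V) (clip_N Z - clip_N V)] <= 0 with a nonnegative integrand,
   which thus vanishes a.s. for every N; letting N -> oo gives V = Z a.s. *)

From mathcomp Require Import all_boot all_order all_algebra.
From mathcomp Require Import all_classical all_reals all_analysis.
From mathcomp Require Import measurable_realfun.
From mathcomp Require Import ring lra.
Import Order.TTheory GRing.Theory Num.Theory.
Import HBNNSimple.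
Set Implicit Arguments. Unset Strict Implicit. Unset Printing Implicit Defensive.
Local Open Scope classical_set_scope.
Local Open Scope ring_scope.

Section clip.
Variable R : realDomainType.
Implicit Types x y N : R.

Local Ltac clip_cases N x := case: (ltP x (- N)) => ?; case: (ltP N x) => ?.

Definition clip N x : R := if x < - N then - N else if N < x then N else x.

Lemma ler_clip N x y : 0 <= N -> x <= y -> clip N x <= clip N y.
Proof. by rewrite /clip => N0 xy; clip_cases N x; clip_cases N y; lra. Qed.

Lemma clip_subr_le N x y : 0 <= N -> x <= y -> clip N y - clip N x <= y - x.
Proof. by rewrite /clip => N0 xy; clip_cases N x; clip_cases N y; lra. Qed.

Lemma normr_clip_le N x : 0 <= N -> `|clip N x| <= N.
Proof. by rewrite /clip => N0; apply/ler_normlP; clip_cases N x; split; lra. Qed.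

Lemma clip_id N x : `|x| <= N -> clip N x = x.
Proof. by rewrite /clip => /ler_normlP[? ?]; clip_cases N x; lra. Qed.

Lemma clip_gap_ge0 N x y : 0 <= N -> 0 <= (x - y) * (clip N x - clip N y).
Proof.
move=> N0; have [xy|yx] := lerP x y.
  by apply: mulr_le0; have := ler_clip N0 xy; lra.
by apply: mulr_ge0; have := ler_clip N0 (ltW yx); lra.
Qed.

Lemma nondecreasing_clip_perturbation (f k : R -> R) N s :
  0 <= N -> 0 <= s <= 1 ->
  {homo f : x y / x <= y} -> {homo k : x y / x <= y} ->
  {homo (fun y => f y + s * (k y - clip N (f y))) : x y / x <= y}.
Proof.
move=> N0 /andP[s0 s1] f_nd k_nd x y xy.
have := clip_subr_le N0 (f_nd _ _ xy); have := f_nd _ _ xy; have := k_nd _ _ xy.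
nra.
Qed.

End clip.

Lemma clip_gap_eq0 (R : archiRealDomainType) (x y : R) :
  (forall n : nat, (x - y) * (clip n%:R x - clip n%:R y) = 0) -> x = y.
Proof.
move=> gap0; have := gap0 (Num.bound (`|x| + `|y|)).
have /archi_boundP := addr_ge0 (normr_ge0 x) (normr_ge0 y).
move=> /ltW xy_le; rewrite !clip_id; last 2 first.
- by apply: le_trans xy_le; rewrite lerDr.
- by apply: le_trans xy_le; rewrite lerDl.
by move/eqP; rewrite mulf_eq0 orbb subr_eq0 => /eqP.
Qed.

Section clipped_inverse.
Variables (R : realType) (h : R -> R).
Implicit Types y z N : R.

(* The function k_N; clipping keeps it real-valued when h is not onto. *)
Definition clipped_inverse N y : R :=
  sup [set z | z = - N \/ (- N <= z <= N /\ h z <= y)].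

Let clipped_inverse_ub N y : 0 <= N ->
  ubound [set z | z = - N \/ (- N <= z <= N /\ h z <= y)] N.
Proof. by move=> N0 z [->|[/andP[_ ?] _]] //; lra. Qed.

Lemma ler_clipped_inverse N : 0 <= N -> {homo clipped_inverse N : y y' / y <= y'}.
Proof.
move=> N0 y y' yy'; apply: ge_sup; first by exists (- N); left.
move=> z Ez; apply: ub_le_sup; first by exists N; exact: clipped_inverse_ub.
by case: Ez => [->|[? ?]]; [left|right; split => //; lra].
Qed.

Lemma normr_clipped_inverse_le N y : 0 <= N -> `|clipped_inverse N y| <= N.
Proof.
move=> N0; apply/ler_normlP; split.
  suff : - N <= clipped_inverse N y by lra.
  by apply: ub_le_sup; [exists N; exact: clipped_inverse_ub|left].
by apply: ge_sup; [exists (- N); left|exact: clipped_inverse_ub].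
Qed.

Hypothesis h_incr : {homo h : y y' / y < y'}.

Lemma clipped_inverseK N z : 0 <= N -> clipped_inverse N (h z) = clip N z.
Proof.
move=> N0; rewrite /clipped_inverse; set E := (X in sup X).
have Eclip : E (clip N z).
  rewrite /E /clip /=; case: (ltP z (- N)) => ?; first by left.
  right; case: (ltP N z) => ?; split; try lra.
  by rewrite le_eqVlt h_incr ?orbT.
have ub_clip : ubound E (clip N z).
  move=> u [->|[/andP[? ?] hu]].
    by have /ler_normlP[? ?] := normr_clip_le z N0; lra.
  have uz : u <= z by rewrite leNgt; apply/negP => /h_incr; lra.
  by rewrite /clip; case: (ltP z (- N)) => ?; case: (ltP N z) => ?; lra.
apply/le_anti/andP; split; first by apply: ge_sup => //; exists (clip N z).
by apply: ub_le_sup => //; exists (clip N z).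
Qed.

End clipped_inverse.

Lemma first_order_le0 (R : realFieldType) (b q : R) :
  (forall s, 0 < s < 1 -> 2 * s * b <= s ^+ 2 * q) -> b <= 0.
Proof.
move=> slopes; rewrite leNgt; apply/negP => b0.
have D0 : 0 < `|q| + b + 1 by have := normr_ge0 q; lra.
pose s := b / (`|q| + b + 1).
have s0 : 0 < s by exact: divr_gt0.
have sD : s * (`|q| + b + 1) = b by rewrite mulfVK ?gt_eqF.
have s1 : s < 1 by rewrite /s ltr_pdivrMr // mul1r; have := normr_ge0 q; lra.
have := slopes s; rewrite s0 s1 => /(_ isT) slope.
have qq : s ^+ 2 * q <= s ^+ 2 * `|q| by rewrite ler_wpM2l ?sqr_ge0 ?ler_norm.
nra.
Qed.

Section integrable_real.
Context d (T : measurableType d) (R : realType).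
Variable mu : {measure set T -> \bar R}.
Local Notation Int f := (mu.-integrable setT (EFin \o f)).

Lemma EFin_Rintegral (f : T -> R) : Int f ->
  (\int[mu]_t f t)%:E = (\int[mu]_t (f t)%:E)%E.
Proof. by move=> if_; rewrite fineK // integrable_fin_num. Qed.

Lemma integrable_bounded_mul (f g : T -> R) M : measurable_fun setT f ->
  (forall t, `|f t| <= M) -> Int g -> Int (fun t => f t * g t).
Proof.
move=> mf fM ig; apply: (le_integrable measurableT (g := fun t => (M * g t)%:E)) => //.
- apply/measurable_EFinP/measurable_funM => //.
  exact/measurable_EFinP/(measurable_int _ ig).
- move=> t _; rewrite !abse_EFin lee_fin !normrM ler_wpM2r //.
  exact: le_trans (fM t) (ler_norm _).
- exact: (integrableZl _ _ ig).
Qed.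

End integrable_real.

Section integrable_finite_measure.
Context d (T : measurableType d) (R : realType).
Variable mu : {finite_measure set T -> \bar R}.
Local Notation Int f := (mu.-integrable setT (EFin \o f)).

Lemma integrable_bounded (f : T -> R) M : measurable_fun setT f ->
  (forall t, `|f t| <= M) -> Int f.
Proof.
move=> mf fM; apply: (le_integrable measurableT (g := EFin \o cst M)) => //.
- exact/measurable_EFinP.
- by move=> t _; rewrite lee_fin (le_trans (fM t)) ?ler_norm.
- exact: finite_measure_integrable_cst.
Qed.

Lemma integrable_of_sq (f : T -> R) : measurable_fun setT f ->
  Int (fun t => f t ^+ 2) -> Int f.
Proof.
move=> mf if2.
apply: (le_integrable measurableT (g := EFin \o fun t => 1 + f t ^+ 2)) => //.
- exact/measurable_EFinP.
- move=> t _; rewrite lee_fin (le_trans _ (ler_norm _)) //.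
  have := sqr_ge0 (`|f t| - 1); rewrite -(real_normK (num_real (f t))).
  by have := normr_ge0 (f t); nra.
- exact: (integrableD _ (finite_measure_integrable_cst _ _ _) if2).
Qed.

End integrable_finite_measure.

Section integral_comp_weighted.
Local Open Scope ereal_scope.
Context d d' (T : measurableType d) (S : measurableType d') (R : realType).
Variables (mu : {measure set T -> \bar R}) (X : T -> S).
Hypothesis mX : measurable_fun setT X.

Lemma integral_nnsfun_comp_mul (u : {nnsfun S >-> R}) (w : T -> \bar R) :
  measurable_fun setT w -> (forall t, 0 <= w t) ->
  \int[mu]_t ((u (X t))%:E * w t) =
  \sum_(r \in range u) r%:E * \int[mu]_(t in X @^-1` (u @^-1` [set r])) w t.
Proof.
move=> mw w0.
have mI r : measurable_fun setT (fun t => (\1_(u @^-1` [set r]) (X t) : R)).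
  apply: (measurableT_comp (f := \1_(u @^-1` [set r]) : S -> R)) mX.
  exact/measurable_indic/measurable_funPTI.
transitivity (\int[mu]_t (\sum_(r \in range u)
    (r * \1_(u @^-1` [set r]) (X t))%:E * w t)).
  apply: eq_integral => t _.
  rewrite -ge0_mule_fsuml => [|r]; last exact: nnfun_muleindic_ge0.
  by rewrite fsumEFin // -(fimfunE _ (X t)).
rewrite ge0_integral_fsum//; first last.
- by move=> r t _; rewrite mule_ge0 ?w0 ?nnfun_muleindic_ge0.
- move=> r; apply: emeasurable_funM => //.
  exact/measurable_EFinP/measurable_funM.
apply: eq_fsbigr => r /set_mem ur.
under eq_integral do rewrite EFinM -muleA.
rewrite ge0_integralZl//; last 3 first.
- by apply: emeasurable_funM => //; apply/measurable_EFinP.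
- by move=> t _; rewrite mule_ge0 ?w0 ?lee_fin.
- by case: ur => t _ <-; rewrite lee_fin.
congr (_ * _); rewrite [RHS]integral_mkcond; apply: eq_integral => t _.
rewrite patchE /= indicE.
have -> : (X t \in u @^-1` [set r]) = (t \in X @^-1` (u @^-1` [set r])) by [].
by case: ifPn; rewrite ?mul1e ?mul0e.
Qed.

Lemma integral_comp_mul_approx (phi : S -> \bar R) (mphi : measurable_fun setT phi)
    (w : T -> R) :
  (forall s, 0 <= phi s) -> measurable_fun setT w -> (forall t, (0 <= w t)%R) ->
  \int[mu]_t (phi (X t) * (w t)%:E) =
  limn (fun n => \int[mu]_t ((nnsfun_approx measurableT mphi n (X t))%:E * (w t)%:E)).
Proof.
move=> phi0 mw w0; set u := nnsfun_approx measurableT mphi.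
have u_cvg t : phi (X t) * (w t)%:E = limn (fun n => (u n (X t))%:E * (w t)%:E).
  by apply/esym/cvg_lim => //; apply: cvgeZr => //; exact: cvg_nnsfun_approx.
under eq_integral => t _ do rewrite u_cvg.
apply: monotone_convergence => //.
- move=> n; apply/emeasurable_funM/measurable_EFinP => //.
  exact/measurable_EFinP/(measurableT_comp (f := u n : S -> R)).
- by move=> n t _; rewrite mule_ge0 ?lee_fin.
- move=> t _ a b ab /=; rewrite lee_wpmul2r ?lee_fin //.
  exact/lefP/nd_nnsfun_approx.
Qed.

Lemma eq_integral_comp_mul_ge0 (w1 w2 : T -> R) :
  measurable_fun setT w1 -> measurable_fun setT w2 ->
  (forall t, (0 <= w1 t)%R) -> (forall t, (0 <= w2 t)%R) ->
  (forall A, measurable A ->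
    \int[mu]_(t in X @^-1` A) (w1 t)%:E = \int[mu]_(t in X @^-1` A) (w2 t)%:E) ->
  forall phi : S -> \bar R, measurable_fun setT phi -> (forall s, 0 <= phi s) ->
  \int[mu]_t (phi (X t) * (w1 t)%:E) = \int[mu]_t (phi (X t) * (w2 t)%:E).
Proof.
move=> mw1 mw2 w10 w20 w12 phi mphi phi0.
rewrite !integral_comp_mul_approx//; congr (limn _); apply/funext => n.
rewrite !integral_nnsfun_comp_mul //; try by move=> t; rewrite lee_fin.
- by apply: eq_fsbigr => r _; rewrite w12 //; exact: measurable_funPTI.
- exact/measurable_EFinP.
- exact/measurable_EFinP.
Qed.

End integral_comp_weighted.

Section cond_exp_orthogonal.
Context d d' (T : measurableType d) (S : measurableType d') (R : realType).
Variables (mu : {finite_measure set T -> \bar R}) (X : T -> S) (Y Z : T -> R).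
Local Notation Int f := (mu.-integrable setT (EFin \o f)).
Hypotheses (mX : measurable_fun setT X) (iY : Int Y) (iZ : Int Z).
Hypothesis eq_YZ : forall A, measurable A ->
  (\int[mu]_(t in X @^-1` A) (Y t)%:E = \int[mu]_(t in X @^-1` A) (Z t)%:E)%E.

Let iYZ : Int (fun t => Y t - Z t). Proof. exact: (integrableB _ iY iZ). Qed.

Lemma cond_exp_orthogonal_ge0 (psi : S -> R) M : measurable_fun setT psi ->
  (forall s, 0 <= psi s <= M) -> \int[mu]_t (psi (X t) * (Y t - Z t)) = 0.
Proof.
move=> mpsi psiM.
have psiXM t : `|psi (X t)| <= M.
  by have /andP[? ?] := psiM (X t); rewrite ger0_norm.
have mpsiX : measurable_fun setT (psi \o X) by exact: measurableT_comp.
pose G t := `|Y t| + `|Z t|.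
have iG : Int G by exact: (integrableD _ (integrable_norm iY) (integrable_norm iZ)).
have iYG : Int (fun t => Y t + G t) by exact: (integrableD _ iY iG).
have iZG : Int (fun t => Z t + G t) by exact: (integrableD _ iZ iG).
have YG0 t : 0 <= Y t + G t.
  by rewrite /G; have /ler_normlP[? ?] := lexx `|Y t|; have := normr_ge0 (Z t); lra.
have ZG0 t : 0 <= Z t + G t.
  by rewrite /G; have /ler_normlP[? ?] := lexx `|Z t|; have := normr_ge0 (Y t); lra.
have eq_YZG A : measurable A -> (\int[mu]_(t in X @^-1` A) (Y t + G t)%:E =
                                 \int[mu]_(t in X @^-1` A) (Z t + G t)%:E)%E.
  move=> mA; have mXA : measurable (X @^-1` A) by rewrite -[X @^-1` A]setTI; exact: mX.
  have onXA f : Int f -> mu.-integrable (X @^-1` A) (EFin \o f).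
    by move=> if_; apply: integrableS if_.
  under eq_integral do rewrite EFinD; under [RHS]eq_integral do rewrite EFinD.
  by rewrite !integralD ?onXA ?eq_YZ.
have mYG : measurable_fun setT (fun t => Y t + G t).
  exact/measurable_EFinP/(measurable_int _ iYG).
have mZG : measurable_fun setT (fun t => Z t + G t).
  exact/measurable_EFinP/(measurable_int _ iZG).
have mEpsi : measurable_fun setT (EFin \o psi) by exact/measurable_EFinP.
have psi0 s : (0 <= (EFin \o psi) s)%E by have /andP[? _] := psiM s; rewrite lee_fin.
have eq_int := eq_integral_comp_mul_ge0 mX mYG mZG YG0 ZG0 eq_YZG mEpsi psi0.
transitivity (\int[mu]_t (psi (X t) * (Y t + G t)) -
              \int[mu]_t (psi (X t) * (Z t + G t))).
  rewrite -RintegralB //; last 2 first.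
  - exact: integrable_bounded_mul psiXM iYG.
  - exact: integrable_bounded_mul psiXM iZG.
  by apply: eq_Rintegral => t _; ring.
suff -> : \int[mu]_t (psi (X t) * (Y t + G t)) = \int[mu]_t (psi (X t) * (Z t + G t)).
  by rewrite subrr.
by congr fine; exact: eq_int.
Qed.

Lemma cond_exp_orthogonal (psi : S -> R) M : measurable_fun setT psi ->
  (forall s, `|psi s| <= M) -> \int[mu]_t (psi (X t) * (Y t - Z t)) = 0.
Proof.
move=> mpsi psiM.
have shifted_ge0 s : 0 <= psi s + `|M| <= `|M| + `|M|.
  have /ler_normlP[? ?] := psiM s; have := ler_norm M.
  by move=> ?; apply/andP; split; lra.
have mshifted : measurable_fun setT (fun s => psi s + `|M|) by exact: measurable_funD.
transitivity (\int[mu]_t ((psi (X t) + `|M|) * (Y t - Z t)) -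
              \int[mu]_t (`|M| * (Y t - Z t))).
  rewrite -RintegralB //; last 2 first.
  - apply: (integrable_bounded_mul (M := `|M| + `|M|)) iYZ.
      exact: (measurableT_comp mshifted mX).
    by move=> t; have /andP[? ?] := shifted_ge0 (X t); rewrite ger0_norm.
  - exact: (integrableZl _ _ iYZ).
  by apply: eq_Rintegral => t _; ring.
have /= -> := cond_exp_orthogonal_ge0 mshifted shifted_ge0.
have const_ge0 (s : S) : 0 <= `|M| <= `|M| by rewrite normr_ge0 lexx.
by have /= -> := cond_exp_orthogonal_ge0 (measurable_cst _) const_ge0; rewrite subr0.
Qed.
End cond_exp_orthogonal.

Section isotonic_risk_minimizer.
Context d d' (T : measurableType d) (S : measurableType d') (R : realType).
Variables (P : probability T R) (X : T -> S) (Y : T -> R).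
Local Notation Int f := (P.-integrable setT (EFin \o f)).
Hypotheses (mX : measurable_fun setT X) (mY : measurable_fun setT Y).
Hypothesis iY2 : P.-integrable setT (fun t => (Y t ^+ 2)%:E).
Variable m : S -> R.
Hypothesis m_cond_exp : is_cond_exp P X Y m.
Variable h : R -> R.
Hypothesis h_incr : {homo h : x y / x < y}.
Variable g : S -> R.
Hypothesis gE : forall s, g s = h (m s).
Variable f : R -> R.
Hypothesis f_nd : {homo f : x y / x <= y}.
Hypothesis f_min : forall f' : R -> R, {homo f' : x y / x <= y} ->
  (sq_risk P X Y g f <= sq_risk P X Y g f')%E.

Let Z t := m (X t).
Let V t := f (g (X t)).

Let mf : measurable_fun setT f. Proof. exact: nondecreasing_measurable. Qed.

Let mg : measurable_fun setT g.
Proof.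
have [mm _ _] := m_cond_exp.
have h_nd : {homo h : x y / x <= y}.
  by move=> x y; rewrite le_eqVlt => /predU1P[->|/h_incr/ltW].
rewrite (_ : g = h \o m); last by apply/funext => s; rewrite gE.
exact: measurableT_comp (nondecreasing_measurable measurableT h_nd) mm.
Qed.

Let mV : measurable_fun setT V.
Proof. exact/measurableT_comp/measurableT_comp. Qed.

Let iY : Int Y. Proof. exact: integrable_of_sq. Qed.

Let iZ : Int Z. Proof. by case: m_cond_exp. Qed.

Let mZ : measurable_fun setT Z. Proof. exact/measurable_EFinP/(measurable_int _ iZ). Qed.

Lemma residual_sq_integrable : Int (fun t => (Y t - V t) ^+ 2).
Proof.
apply/integrableP; split.
  exact/measurable_EFinP/measurable_funX/(measurable_funB mY mV).
under eq_integral do rewrite gee0_abs ?lee_fin ?sqr_ge0 //.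
have := @f_min (fun=> 0) (fun _ _ _ => lexx 0); rewrite /sq_risk => risk_le.
apply: le_lt_trans risk_le _; under eq_integral do rewrite subr0.
rewrite (eq_integral (fun t => `|(Y t ^+ 2)%:E|)%E); first by case/integrableP: iY2.
by move=> t _; rewrite gee0_abs // lee_fin sqr_ge0.
Qed.

Let iR : Int (fun t => Y t - V t).
Proof. exact: integrable_of_sq (measurable_funB mY mV) residual_sq_integrable. Qed.

Section clip_level.
Variable N : R.
Hypothesis N0 : 0 <= N.

Let psi s := clipped_inverse h N (g s) - clip N (f (g s)).

Let mclip : measurable_fun setT (clip N).
Proof. exact: nondecreasing_measurable (fun x y => @ler_clip R N x y N0). Qed.

Let mpsi : measurable_fun setT psi.
Proof.
have mk := nondecreasing_measurable measurableT (ler_clipped_inverse h N0).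
exact: measurable_funB (measurableT_comp mk mg)
  (measurableT_comp mclip (measurableT_comp mf mg)).
Qed.

Let psi_bound s : `|psi s| <= N + N.
Proof.
apply: le_trans (ler_normB _ _) _.
by apply: lerD; [exact: normr_clipped_inverse_le|exact: normr_clip_le].
Qed.

Let psiXE t : psi (X t) = clip N (Z t) - clip N (V t).
Proof. by rewrite /psi {1}gE (clipped_inverseK h_incr _ N0). Qed.

Let mpsiX : measurable_fun setT (psi \o X). Proof. exact: measurableT_comp. Qed.

Let iPR : Int (fun t => psi (X t) * (Y t - V t)).
Proof. exact: integrable_bounded_mul mpsiX (fun t => psi_bound (X t)) iR. Qed.

Lemma residual_clip_gap_le0 : \int[P]_t (psi (X t) * (Y t - V t)) <= 0.
Proof.
have iP2 : Int (fun t => psi (X t) ^+ 2).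
  apply: (integrable_bounded_mul mpsiX (fun t => psi_bound (X t))).
  exact: integrable_bounded mpsiX (fun t => psi_bound (X t)).
apply: (first_order_le0 (q := \int[P]_t (psi (X t) ^+ 2))) => s /andP[s0 s1].
pose f_s y := f y + s * (clipped_inverse h N y - clip N (f y)).
have f_s_nd : {homo f_s : x y / x <= y}.
  apply: nondecreasing_clip_perturbation => //; last exact: (ler_clipped_inverse h N0).
  by rewrite !ltW.
have := f_min f_s_nd; rewrite /sq_risk.
(* f_s (g (X t)) = V t + s * psi (X t) *)
have expand t : (Y t - f_s (g (X t))) ^+ 2 = (Y t - V t) ^+ 2 +
    (- (2 * s)) * (psi (X t) * (Y t - V t)) + s ^+ 2 * psi (X t) ^+ 2.
  by rewrite /f_s /psi /V; ring.
under [X in (_ <= X)%E]eq_integral do rewrite expand.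
have iR2 := residual_sq_integrable.
rewrite -!EFin_Rintegral ?lee_fin; last 2 first.
- exact: (integrableD _ (integrableD _ iR2 (integrableZl _ _ iPR))
    (integrableZl _ _ iP2)).
- exact: iR2.
rewrite !RintegralD ?RintegralZl //.
- by rewrite -/(V _); lra.
- exact: (integrableZl _ _ iPR).
- exact: (integrableD _ iR2 (integrableZl _ _ iPR)).
- exact: (integrableZl _ _ iP2).
Qed.

Lemma clip_gap_integral_eq0 :
  (\int[P]_t ((Z t - V t) * (clip N (Z t) - clip N (V t)))%:E = 0)%E.
Proof.
have [_ _ eq_YZ] := m_cond_exp.
have iPYZ : Int (fun t => psi (X t) * (Y t - Z t)).
  exact: integrable_bounded_mul mpsiX (fun t => psi_bound (X t)) (integrableB _ iY iZ).
apply/le_anti/andP; split; last first.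
  by apply: integral_ge0 => t _; rewrite lee_fin clip_gap_ge0.
have gapE t : (Z t - V t) * (clip N (Z t) - clip N (V t)) =
    psi (X t) * (Y t - V t) - psi (X t) * (Y t - Z t).
  by rewrite psiXE; ring.
under eq_integral do rewrite gapE.
rewrite -EFin_Rintegral ?lee_fin; last exact: (integrableB _ iPR iPYZ).
rewrite RintegralB // (cond_exp_orthogonal mX iY iZ eq_YZ mpsi psi_bound) subr0.
exact: residual_clip_gap_le0.
Qed.

Lemma clip_gap_ae0 :
  {ae P, forall t, (Z t - V t) * (clip N (Z t) - clip N (V t)) = 0}.
Proof.
have mgap : measurable_fun setT
    (fun t => ((Z t - V t) * (clip N (Z t) - clip N (V t)))%:E).
  apply/measurable_EFinP/measurable_funM; first exact: measurable_funB mZ mV.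
  exact: measurable_funB (measurableT_comp mclip mZ) (measurableT_comp mclip mV).
have /(ae_eq_integral_abs P measurableT mgap).1 : (\int[P]_t `|
    ((Z t - V t) * (clip N (Z t) - clip N (V t)))%:E| = 0)%E.
  under eq_integral do rewrite gee0_abs ?lee_fin ?clip_gap_ge0 //.
  exact: clip_gap_integral_eq0.
by apply: filterS => t /(_ I) [].
Qed.

End clip_level.
End isotonic_risk_minimizer.

Theorem theorem3 (d : measure_display) (T : measurableType d) (R : realType)
  (P : probability T R) (d' : measure_display) (S : measurableType d')
  (X : T -> S) (Y : T -> R)
  (hX : measurable_fun setT X) (hY : measurable_fun setT Y)
  (hY2 : P.-integrable setT (fun t => (Y t ^+ 2)%:E))
  (mstar : S -> R) (hm : is_cond_exp P X Y mstar)
  (h : R -> R) (hh : {homo h : x y / x < y})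
  (gstar : S -> R) (hg : forall x, gstar x = h (mstar x))
  (fstar : R -> R) (hfF : {homo fstar : x y / x <= y})
  (hfmin : forall f : R -> R, {homo f : x y / x <= y} ->
     (sq_risk P X Y gstar fstar <= sq_risk P X Y gstar f)%E) :
  {ae P, forall t, fstar (gstar (X t)) = mstar (X t)}.
Proof.
have gap n := clip_gap_ae0 hX hY hY2 hm hh hg hfF hfmin (ler0n R n).
apply: filterS (ae_foralln gap) => t gap_t.
exact/esym/clip_gap_eq0.
Qed.
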